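(* Let $M$ be a finite-horizon reward-free MDP, $\Pi\subseteq\Pi_{\mathrm{RNS}}$ and $h\in[H]$. For all $\varepsilon>0$, $$\mathsf{Cov}^M_{h,\varepsilon}\le 1+2\sqrt{\frac{C^M_{1;h}}{\varepsilon}}.$$
   Context: Episodic reward-free MDP $M$ (countable $\mathcal{X}$, actions $\mathcal{A}$, horizon $H$); $\Pi_{\mathrm{RNS}}$ randomized non-stationary policies; $d^{M,\pi}_h(x,a)$ is the layer-$h$ state-action occupancy and $d^{M,p}_h=\mathbb{E}_{\pi\sim p}d^{M,\pi}_h$. Definitions: $\Psi^M_{h,\varepsilon}(p)=\sup_{\pi\in\Pi}\mathbb{E}^{M,\pi}\big[\frac{d^{M,\pi}_h(x_h,a_h)}{d^{M,p}_h(x_h,a_h)+\varepsilon d^{M,\pi}_h(x_h,a_h)}\big]$, $\mathsf{Cov}^M_{h,\varepsilon}=\inf_{p\in\Delta(\Pi)}\Psi^M_{h,\varepsilon}(p)$, and $C^M_{1;h}=\inf_{\mu\in\Delta(\mathcal{X}\times\mathcal{A})}\sup_{\pi\in\Pi}\mathbb{E}^{M,\pi}\big[\frac{d^{M,\pi}_h(x_h,a_h)}{\mu(x_h,a_h)}\big]$. *)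

From HB Require Import structures.
From mathcomp Require Import all_boot all_order all_algebra.
From mathcomp Require Import all_classical all_reals.
From mathcomp Require Import ereal topology normedtype sequences esum.
From Stdlib Require List.
Set Implicit Arguments. Unset Strict Implicit. Unset Printing Implicit Defensive.
Import Order.TTheory GRing.Theory Num.Theory.
Local Open Scope classical_set_scope.
Local Open Scope ring_scope.

Section Defs.
Variable R : realType.

Definition is_distr (T : countType) (f : T -> R) : Prop :=
  (forall t, 0 <= f t) /\ (\esum_(t in [set: T]) (f t)%:E = 1)%E.

Variables (X : countType) (A : finType).

(* Episodic reward-free MDP with horizon [horizon]; layers are 1..horizon.
   [init] is the distribution of x_1, and [trans h x a] is the distribution
   of x_{h+1} given (x_h, a_h) = (x, a). *)
Record mdp := MDP {
  horizon : nat;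
  init : X -> R;
  trans : nat -> X -> A -> X -> R;
  init_distr : is_distr init;
  trans_distr : forall h x a, is_distr (trans h x a) }.

(* Randomized non-stationary (history-dependent) policy: at layer h, given
   the past history ((x_1,a_1),...,(x_{h-1},a_{h-1})) and the current state x_h,
   [pol h hist x] is a distribution over actions. *)
Record policy := Policy {
  pol : nat -> seq (X * A) -> X -> A -> R;
  pol_distr : forall h hist x, is_distr (pol h hist x) }.

(* probability that the first (size tau) state-action pairs equal tau,
   started at layer h with (chronological) past history hist *)
Fixpoint traj_prob (M : mdp) (pi : policy) (h : nat) (hist tau : seq (X * A))
  : R :=
  match tau with
  | [::] => 1
  | xa :: tau' =>
      (if hist is _ :: _ then
         trans M h.-1 (last xa hist).1 (last xa hist).2 xa.1
       else init M xa.1)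
      * pol pi h hist xa.1 xa.2 * traj_prob M pi h.+1 (rcons hist xa) tau'
  end.

(* layer-h state-action occupancy d^{M,pi}_h(x,a) = P^{M,pi}[(x_h,a_h) = (x,a)] *)
Definition occ (M : mdp) (pi : policy) (h : nat) (xa : X * A) : \bar R :=
  (\esum_(tau in [set tau : seq (X * A) | size tau = h /\ ohead (rev tau) = Some xa])
     (traj_prob M pi 1 [::] tau)%:E)%E.

(* Delta(Pi): finitely supported distributions over a policy class Pi,
   represented as finite lists of (weight, policy) pairs. *)
Definition pdistr (Pi : set policy) : set (seq (R * policy)) :=
  [set p | List.Forall (fun wp => 0 <= wp.1 /\ Pi wp.2) p /\
           \sum_(wp <- p) wp.1 = 1].

Definition occ_mix (M : mdp) (p : seq (R * policy)) (h : nat) (xa : X * A)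
  : \bar R := (\sum_(wp <- p) (wp.1)%:E * occ M wp.2 h xa)%E.

Definition expect_layer (M : mdp) (pi : policy) (h : nat) (g : X * A -> \bar R)
  : \bar R := (\esum_(xa in [set: X * A]) occ M pi h xa * g xa)%E.

Definition Psi (M : mdp) (Pi : set policy) (h : nat) (eps : R)
  (p : seq (R * policy)) : \bar R :=
  ereal_sup [set expect_layer M pi h
               (fun xa => (occ M pi h xa / (occ_mix M p h xa + eps%:E * occ M pi h xa))%E)
            | pi in Pi].

Definition Cov (M : mdp) (Pi : set policy) (h : nat) (eps : R) : \bar R :=
  ereal_inf [set Psi M Pi h eps p | p in pdistr Pi].

Definition C1 (M : mdp) (Pi : set policy) (h : nat) : \bar R :=
  ereal_inf [set ereal_sup [set expect_layer M pi h
                              (fun xa => (occ M pi h xa / (mu xa)%:E)%E)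
                           | pi in Pi]
            | mu in [set mu : X * A -> R | is_distr mu]].

End Defs.

(* Fix a distribution mu with sum_x d_pi(x)^2 / mu(x) <= C for all pi in Pi,
   where C = C_{1;h} + eps/4, and put k = sqrt(C/eps).  Outside a finite set X
   of small mu-mass, AM-GM bounds d^2 / (d_p + eps d) by
   d^2 / (2 k eps mu) + k mu / (2 eps).  On X, take p to (nearly) maximise the
   log-barrier sum_{x in X} mu(x) ln d_p(x) over mixtures; first-order
   optimality gives sum_{x in X} mu(x) d_pi(x) / d_p(x) <= 4 for every pi, and
   AM-GM bounds d^2 / (d_p + eps d) by d^2 / (2 k eps mu) + k mu d / (8 d_p).
   Summing, Psi(p) <= k/2 + k/2 + 1/2, and k <= sqrt(C_{1;h}/eps) + 1/2. *)
From HB Require Import structures.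
From mathcomp Require Import all_boot all_order all_algebra.
From mathcomp Require Import all_classical all_reals.
From mathcomp Require Import ereal topology normedtype sequences esum exp.
From mathcomp Require Import lra ring finmap.
From Stdlib Require List.
Import Order.TTheory GRing.Theory Num.Theory.
Local Open Scope classical_set_scope.
Local Open Scope ring_scope.
Set Implicit Arguments. Unset Strict Implicit. Unset Printing Implicit Defensive.

Section RealFieldInequalities.
Variable R : realFieldType.
Implicit Types (x y k d q m e a b c u B C : R).

Lemma le_add_of_sqr_le x y k : 0 <= x -> 0 <= y -> 0 <= k ->
  k ^+ 2 <= 4 * (x * y) -> k <= x + y.
Proof.
move=> x_ge y_ge k_ge sq_le; rewrite -ler_sqr ?nnegrE ?addr_ge0 //.
by apply: le_trans sq_le _; have := sqr_ge0 (x - y); rewrite !expr2; lra.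
Qed.

(* Expand (A + B) * (q + e * d) and bound each of its two pairs of cross terms
   by AM-GM: both pairs have product a * b * e * d ^+ 4. *)
Lemma sqr_div_le_bulk d q m e a b : 0 <= d -> 0 < q -> 0 < m -> 0 < e ->
  0 <= a -> 0 <= b -> 1 <= 16 * a * b * e ->
  d * (d / (q + e * d)) <= a * (d * (d / m)) + b * (m * (d / q)).
Proof.
move=> d_ge q_gt m_gt e_gt a_ge b_ge abe_ge.
have [q_ge m_ge e_ge] := And3 (ltW q_gt) (ltW m_gt) (ltW e_gt).
have ed_ge : 0 <= e * d by rewrite mulr_ge0.
have den_gt : 0 < q + e * d by lra.
set A := a * (d * (d / m)); set B := b * (m * (d / q)).
have A_ge : 0 <= A by rewrite /A !mulr_ge0 ?invr_ge0.
have B_ge : 0 <= B by rewrite /B !mulr_ge0 ?invr_ge0.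
have d4 : (d * d / 2) ^+ 2 <= 4 * (a * b * e * d ^+ 4).
  have : d ^+ 4 <= 16 * a * b * e * d ^+ 4 by rewrite ler_peMl // exprn_ge0.
  have -> : (d * d / 2) ^+ 2 = d ^+ 4 / 4 by field.
  lra.
have dd_ge : 0 <= d * d / 2 by rewrite divr_ge0 ?mulr_ge0.
have cross1 : d * d / 2 <= A * q + B * (e * d).
  apply: le_add_of_sqr_le (mulr_ge0 A_ge q_ge) (mulr_ge0 B_ge ed_ge) dd_ge _.
  suff -> : A * q * (B * (e * d)) = a * b * e * d ^+ 4 by [].
  by rewrite /A /B; field; rewrite !gt_eqF.
have cross2 : d * d / 2 <= A * (e * d) + B * q.
  apply: le_add_of_sqr_le (mulr_ge0 A_ge ed_ge) (mulr_ge0 B_ge q_ge) dd_ge _.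
  suff -> : A * (e * d) * (B * q) = a * b * e * d ^+ 4 by [].
  by rewrite /A /B; field; rewrite !gt_eqF.
rewrite mulrA ler_pdivrMr //.
have -> : (A + B) * (q + e * d) = (A * q + B * (e * d)) + (A * (e * d) + B * q) by ring.
lra.
Qed.

Lemma sqr_div_le_tail d q m e a c : 0 <= d -> 0 <= q -> 0 < m -> 0 < e ->
  0 <= a -> 0 <= c -> 1 <= 4 * a * c * e ^+ 2 ->
  d * (d / (q + e * d)) <= a * (d * (d / m)) + c * m.
Proof.
move=> d_ge q_ge m_gt e_gt a_ge c_ge ace_ge.
have [m_ge e_ge] := (ltW m_gt, ltW e_gt).
have [->|d_neq0] := eqVneq d 0; first by rewrite !mul0r mulr0 add0r mulr_ge0.
have d_gt : 0 < d by rewrite lt_def d_neq0.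
have le_d_div_e : d * (d / (q + e * d)) <= d / e.
  have den_gt : 0 < q + e * d by have := mulr_gt0 e_gt d_gt; lra.
  rewrite mulrA ler_pdivrMr // mulrAC ler_pdivlMr //.
  by have := mulr_ge0 d_ge q_ge; nra.
apply: (le_trans le_d_div_e); apply: le_add_of_sqr_le.
- by rewrite !mulr_ge0 ?invr_ge0.
- by rewrite mulr_ge0.
- by rewrite divr_ge0.
have -> : a * (d * (d / m)) * (c * m) = a * c * d ^+ 2 by field; rewrite gt_eqF.
rewrite expr_div_n ler_pdivrMr ?exprn_gt0 //.
by have := sqr_ge0 d; nra.
Qed.

(* The coefficients make both AM-GM conditions tight: 16 a b e = 4 a c e^2 = 1. *)
Lemma sqr_div_le_bulk_tail (in_bulk : bool) d q m e k :
  0 <= d -> 0 <= q -> 0 <= m -> 0 < e -> 0 < k ->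
  (m = 0 -> d = 0) -> (in_bulk -> 0 < d -> 0 < q) ->
  d * (d / (q + e * d)) <= (2 * k * e)^-1 * (d * (d / m)) +
    (if in_bulk then k / 8 * (m * (d / q)) else k / (2 * e) * m).
Proof.
move=> d_ge q_ge m_ge e_gt k_gt m0_d0 bulk_q.
have [a_gt b_gt c_gt] : [/\ 0 < (2 * k * e)^-1, 0 < k / 8 & 0 < k / (2 * e)].
  by split; rewrite ?invr_gt0 ?divr_gt0 ?mulr_gt0.
have [d0|d_neq0] := eqVneq d 0.
  rewrite d0 !(mul0r, mulr0) add0r.
  by case: in_bulk {bulk_q} => //; exact: mulr_ge0 (ltW c_gt) m_ge.
have d_gt : 0 < d by rewrite lt_def d_neq0.
have m_gt : 0 < m by rewrite lt_def m_ge andbT; apply: contra_neq d_neq0.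
have abe : 16 * (2 * k * e)^-1 * (k / 8) * e = 1 by field; rewrite !gt_eqF.
have ace : 4 * (2 * k * e)^-1 * (k / (2 * e)) * e ^+ 2 = 1 by field; rewrite !gt_eqF.
case: in_bulk bulk_q => [/(_ isT d_gt) q_gt | _].
  by apply: (sqr_div_le_bulk d_ge q_gt m_gt e_gt (ltW a_gt) (ltW b_gt)); rewrite abe.
by apply: (sqr_div_le_tail d_ge q_ge m_gt e_gt (ltW a_gt) (ltW c_gt)); rewrite ace.
Qed.

Lemma le_of_sqr_div_le d m C : 0 <= d -> 0 <= m <= 1 -> (m = 0 -> d = 0) ->
  d * (d / m) <= C -> d <= C + 1.
Proof.
move=> d_ge /andP[m_ge m_le1] m0_d0 le_C.
have C_ge : 0 <= C by apply: le_trans le_C; rewrite mulr_ge0 ?divr_ge0.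
have [m0|m_neq0] := eqVneq m 0; first by rewrite (m0_d0 m0); lra.
have m_gt : 0 < m by rewrite lt_def m_neq0.
by move: le_C; rewrite mulrA ler_pdivrMr // => le_C; nra.
Qed.

Lemma norm_div_sub1_le u q m B : 0 < m -> m <= q -> 0 <= u <= B ->
  `|u / q - 1| <= `|B| / m + 1.
Proof.
move=> m_gt mq /andP[u_ge uB].
have q_gt : 0 < q by exact: lt_le_trans mq.
have ratio_le : u / q <= `|B| / m.
  apply: (@le_trans _ _ (u / m)); first by rewrite ler_wpM2l // lef_pV2 ?posrE.
  by rewrite ler_pM2r ?invr_gt0 // (le_trans uB) ?ler_norm.
have ratio_ge : 0 <= u / q by rewrite divr_ge0 // ltW.
by rewrite ler_norml; apply/andP; split; lra.
Qed.
End RealFieldInequalities.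

Lemma sqrtrD_quarter_le (R : rcfType) (x : R) : 0 <= x ->
  Num.sqrt (x + 1/4) + 1/2 <= 1 + 2 * Num.sqrt x.
Proof.
move=> x_ge; set y := Num.sqrt x; have y_ge : 0 <= y := sqrtr_ge0 x.
suff : Num.sqrt (x + 1/4) <= y + 1/2 by lra.
rewrite -[leRHS]ger0_norm; last by lra.
rewrite -sqrtr_sqr ler_wsqrtr // -(sqr_sqrtr x_ge) -/y.
by rewrite !expr2; nra.
Qed.

Section LnBounds.
Variable R : realType.
Implicit Types (z q u eta K : R).

Lemma ln1D_ge_div z : -1 < z -> z / (1 + z) <= ln (1 + z).
Proof.
move=> z_gt.
have pos : 0 < 1 + z by lra.
have : -1 < - (z / (1 + z)) by rewrite ltrNl opprK ltr_pdivrMr // mul1r; lra.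
move/le_ln1Dx; have -> : 1 - z / (1 + z) = (1 + z)^-1 by field; rewrite gt_eqF.
by rewrite lnV ?posrE //; lra.
Qed.

Lemma ln1D_ge_sqr z : -1/2 <= z -> z - 2 * z ^+ 2 <= ln (1 + z).
Proof.
move=> z_ge; apply: le_trans (ln1D_ge_div _); last by lra.
have pos : 0 < 1 + z by lra.
have : 0 <= z ^+ 2 * (1 + 2 * z) by apply: mulr_ge0; [exact: sqr_ge0 | lra].
by rewrite ler_pdivlMr // expr2 => ?; nra.
Qed.

Lemma ln_step_ge q u eta K : 0 < q -> 0 <= u -> 0 <= eta <= 1/2 ->
  `|u / q - 1| <= K ->
  eta * (u / q - 1) - 2 * eta ^+ 2 * K ^+ 2 <= ln ((1 - eta) * q + eta * u) - ln q.
Proof.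
move=> q_gt u_ge /andP[eta_ge eta_le] dev_le.
have r_ge : 0 <= u / q by rewrite divr_ge0 // ltW.
have z_ge : -1/2 <= eta * (u / q - 1) by nra.
have -> : (1 - eta) * q + eta * u = q * (1 + eta * (u / q - 1)).
  by field; rewrite gt_eqF.
rewrite lnM ?posrE //; last by lra.
rewrite addrAC subrr add0r; apply: le_trans (ln1D_ge_sqr z_ge).
suff : (eta * (u / q - 1)) ^+ 2 <= eta ^+ 2 * K ^+ 2 by lra.
rewrite exprMn ler_wpM2l ?sqr_ge0 //.
by rewrite -real_normK ?num_real // lerXn2r ?nnegrE // (le_trans _ dev_le).
Qed.
End LnBounds.

Section LogBarrier.
Variables (R : realType) (T : eqType).

(* A near-maximiser [q] of the log-barrier [\sum_t w t * ln (q t)] over the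
   convex set [S] gains less than [eta / 2] by a step of size [eta] towards any
   [u] in [S]; expanding [ln] to second order bounds [\sum_t w t * (u t / q t)]. *)
Lemma log_barrier_design (S : set (T -> R)) (s : seq T) (w : T -> R) (m B : R) :
  S !=set0 -> 0 < m ->
  (forall f g l, S f -> S g -> 0 <= l <= 1 -> S (fun t => (1 - l) * f t + l * g t)) ->
  (forall f t, S f -> t \in s -> m <= f t <= B) ->
  (forall t, t \in s -> 0 <= w t) -> \sum_(t <- s) w t <= 1 ->
  exists2 q, S q & forall u, S u -> \sum_(t <- s) w t * (u t / q t) <= 2.
Proof.
move=> [f0 Sf0] m_gt convS f_bnd w_ge w_le.
pose Phi f := \sum_(t <- s) w t * ln (f t).
have Phi_sup : has_sup [set Phi f | f in S].
  split; first by exists (Phi f0), f0.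
  exists (\sum_(t <- s) w t * B) => _ [f Sf <-].
  rewrite /Phi big_seq [leRHS]big_seq; apply: ler_sum => t st.
  have /andP[mf fB] := f_bnd f t Sf st.
  by rewrite ler_wpM2l ?w_ge // (le_trans _ fB) // ltW // ln_sublinear // (lt_le_trans m_gt).
pose K := `|B| / m + 1; pose eta := (4 * K ^+ 2)^-1.
have K_ge : 1 <= K by rewrite lerDr divr_ge0 // ltW.
have K2_ge : 1 <= K ^+ 2 by rewrite expr_ge1 // (le_trans ler01).
have eta_gt : 0 < eta by rewrite invr_gt0; lra.
have etaK : eta * K ^+ 2 = 1 / 4 by rewrite /eta; field; lra.
have eta_le : eta <= 1/2 by nra.
have eta2K : 2 * eta ^+ 2 * K ^+ 2 = eta / 2 by rewrite expr2 -mulrA -mulrA etaK; lra.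
have [_ [q Sq <-] Phi_q] := sup_adherent (divr_gt0 eta_gt (ltr0n _ 2)) Phi_sup.
exists q => // u Su.
pose q' t := (1 - eta) * q t + eta * u t.
have Phi_q' : Phi q' <= sup [set Phi f | f in S].
  by apply: sup_upper_bound => //; exists q' => //; apply: convS => //; lra.
have step t : t \in s ->
    w t * (eta * (u t / q t - 1) - eta / 2) <= w t * (ln (q' t) - ln (q t)).
  move=> st; rewrite ler_wpM2l ?w_ge // -eta2K.
  have /andP[mq qB] := f_bnd q t Sq st; have /andP[mu uB] := f_bnd u t Su st.
  apply: ln_step_ge; [exact: lt_le_trans mq | lra | apply/andP; split; lra |].
  by apply: norm_div_sub1_le => //; apply/andP; split; lra.
have gain : eta * \sum_(t <- s) w t * (u t / q t) - (eta + eta / 2) * \sum_(t <- s) w t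
    < eta / 2.
  have -> : eta * \sum_(t <- s) w t * (u t / q t) - (eta + eta / 2) * \sum_(t <- s) w t
      = \sum_(t <- s) w t * (eta * (u t / q t - 1) - eta / 2).
    by rewrite !mulr_sumr -sumrB; apply: eq_bigr => t _; ring.
  apply: (le_lt_trans (_ : _ <= Phi q' - Phi q)); last by lra.
  rewrite /Phi -sumrB big_seq [leRHS]big_seq; apply: ler_sum => t st.
  by rewrite -[leRHS]mulrBr; exact: step.
have : eta * (1 - \sum_(t <- s) w t) >= 0 by rewrite mulr_ge0 ?subr_ge0 // ltW.
by rewrite -(ler_pM2l eta_gt); nra.
Qed.
End LogBarrier.

Section Mixtures.
Variables (R : realFieldType) (T : eqType) (I : Type).
Implicit Types (D : set I) (v : I -> T -> R) (p : seq (R * I)) (l B : R).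

Definition mixture v p t : R := \sum_(wp <- p) wp.1 * v wp.2 t.

Definition is_mixture D p : Prop :=
  List.Forall (fun wp => 0 <= wp.1 /\ D wp.2) p /\ \sum_(wp <- p) wp.1 = 1.

Definition convex_comb l p1 p2 : seq (R * I) :=
  [seq (l * wp.1, wp.2) | wp <- p1] ++ [seq ((1 - l) * wp.1, wp.2) | wp <- p2].

Lemma mixture_convex_comb v l p1 p2 t :
  mixture v (convex_comb l p1 p2) t = l * mixture v p1 t + (1 - l) * mixture v p2 t.
Proof.
rewrite /mixture big_cat !big_map !mulr_sumr.
by congr (_ + _); apply: eq_bigr => wp _; rewrite mulrA.
Qed.

Lemma is_mixture_convex_comb D l p1 p2 : 0 <= l <= 1 ->
  is_mixture D p1 -> is_mixture D p2 -> is_mixture D (convex_comb l p1 p2).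
Proof.
move=> /andP[l_ge l_le] [F1 sum1] [F2 sum2]; split.
  apply/List.Forall_app; split; apply/List.Forall_map;
    apply: List.Forall_impl F1 || apply: List.Forall_impl F2;
    by move=> wp [w_ge Dw]; split; rewrite ?mulr_ge0 ?subr_ge0.
by rewrite big_cat !big_map /= -!mulr_sumr sum1 sum2; ring.
Qed.

Lemma mixture_dirac v i t : mixture v [:: (1, i)] t = v i t.
Proof. by rewrite /mixture big_seq1 mul1r. Qed.

Lemma is_mixture_dirac D i : D i -> is_mixture D [:: (1, i)].
Proof. by move=> Di; split; [constructor | rewrite big_seq1]. Qed.

Lemma mixture_ge0 D v p t : is_mixture D p -> (forall i, D i -> 0 <= v i t) ->
  0 <= mixture v p t.
Proof.
move=> [F _] v_ge; rewrite /mixture.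
elim: F => [|wp p' [w_ge Dw] _ IH]; first by rewrite big_nil.
by rewrite big_cons addr_ge0 // mulr_ge0 // v_ge.
Qed.

Lemma mixture_le D v p t B : is_mixture D p -> (forall i, D i -> v i t <= B) ->
  mixture v p t <= B.
Proof.
move=> [F sum1] v_le; rewrite /mixture -[leRHS]mul1r -sum1 mulr_suml.
elim: F {sum1} => [|wp p' [w_ge Dw] _ IH]; first by rewrite !big_nil.
by rewrite !big_cons lerD // ler_wpM2l // v_le.
Qed.

Lemma exists_mixture_gt0 D v (s : seq T) : D !=set0 ->
  (forall i t, D i -> 0 <= v i t) -> (forall t, t \in s -> exists2 i, D i & 0 < v i t) ->
  exists2 p, is_mixture D p & forall t, t \in s -> 0 < mixture v p t.
Proof.
move=> [i0 Di0] v_ge; elim: s => [|t s IH] v_pos.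
  by exists [:: (1, i0)] => //; exact: is_mixture_dirac.
have [p p_mix p_gt] : exists2 p, is_mixture D p & forall t, t \in s -> 0 < mixture v p t.
  by apply: IH => t' t's; apply: v_pos; rewrite in_cons t's orbT.
have [i Di vi_gt] := v_pos t (mem_head _ _).
exists (convex_comb (1/2) p [:: (1, i)]).
  by apply: is_mixture_convex_comb => //; [lra | exact: is_mixture_dirac].
move=> t'; rewrite mixture_convex_comb mixture_dirac in_cons.
have [p_ge vi_ge] := (mixture_ge0 p_mix (v_ge^~ t'), v_ge i t' Di).
by case/orP=> [/eqP t't | /p_gt]; [subst t' | ]; lra.
Qed.

Lemma exists_lower_bound_gt0 (f : T -> R) (s : seq T) :
  (forall t, t \in s -> 0 < f t) -> exists2 m, 0 < m & forall t, t \in s -> m <= f t.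
Proof.
elim: s => [|a s IH] f_gt; first by exists 1.
have [m m_gt m_le] : exists2 m, 0 < m & forall t, t \in s -> m <= f t.
  by apply: IH => t ts; apply: f_gt; rewrite in_cons ts orbT.
exists (Num.min m (f a)); first by rewrite lt_min m_gt f_gt ?mem_head.
by move=> t; rewrite in_cons ge_min => /orP[/eqP-> | /m_le->]; rewrite ?lexx ?orbT.
Qed.
End Mixtures.

Section MixtureDesign.
Variables (R : realType) (T : eqType) (I : Type).
Implicit Types (D : set I) (v : I -> T -> R).

(* Mixing half of a mixture [p0] that is positive on [s] into every candidate
   keeps the candidates bounded away from 0 on [s], as [log_barrier_design] needs. *)
Lemma exists_mixture_ratio_le D v (s : seq T) (w : T -> R) (B : R) : D !=set0 ->
  (forall i t, D i -> 0 <= v i t) -> (forall i t, D i -> t \in s -> v i t <= B) ->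
  (forall t, t \in s -> exists2 i, D i & 0 < v i t) ->
  (forall t, t \in s -> 0 <= w t) -> \sum_(t <- s) w t <= 1 ->
  exists p, [/\ is_mixture D p, forall t, t \in s -> 0 < mixture v p t &
    forall i, D i -> \sum_(t <- s) w t * (v i t / mixture v p t) <= 4].
Proof.
move=> D0 v_ge v_le v_pos w_ge w_le.
have [p0 p0_mix p0_gt] := exists_mixture_gt0 D0 v_ge v_pos.
have [m m_gt m_le] := @exists_lower_bound_gt0 _ _ (fun t => mixture v p0 t / 2) s
  (fun t ts => divr_gt0 (p0_gt t ts) (ltr0n _ 2)).
pose half p := convex_comb (1/2) p0 p.
pose S := [set mixture v (half p) | p in is_mixture D].
have S_conv f g l : S f -> S g -> 0 <= l <= 1 -> S (fun t => (1 - l) * f t + l * g t).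
  move=> [p1 p1_mix <-] [p2 p2_mix <-] l01.
  exists (convex_comb (1 - l) p1 p2); first by apply: is_mixture_convex_comb => //; lra.
  by apply/funext => t; rewrite !mixture_convex_comb; ring.
have S_bnd f t : S f -> t \in s -> m <= f t <= B.
  move=> [p p_mix <-] ts; rewrite mixture_convex_comb.
  have vt_le i : D i -> v i t <= B by move/v_le; apply.
  have [p_ge p_le] := (mixture_ge0 p_mix (v_ge^~ t), mixture_le p_mix vt_le).
  have [p0_ge p0_le] := (mixture_ge0 p0_mix (v_ge^~ t), mixture_le p0_mix vt_le).
  by have m_t := m_le t ts; apply/andP; split; lra.
have S_dirac i : D i -> S (mixture v (half [:: (1, i)])).
  by move=> Di; exists [:: (1, i)] => //; exact: is_mixture_dirac.
have [i0 Di0] := D0.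
have [_ [p p_mix <-] ratio_le] := log_barrier_design (ex_intro _ _ (S_dirac i0 Di0))
  m_gt S_conv S_bnd w_ge w_le.
have q_ge t : t \in s -> m <= mixture v (half p) t.
  by move=> ts; have /andP[] := S_bnd _ t (ex_intro2 _ _ p p_mix erefl) ts.
exists (half p); split => [|t ts|i Di]; first by apply: is_mixture_convex_comb => //; lra.
  exact: lt_le_trans m_gt (q_ge t ts).
have le2 := ratio_le _ (S_dirac i Di).
apply: le_trans (_ : \sum_(t <- s) 2 * (w t * (mixture v (half [:: (1, i)]) t
  / mixture v (half p) t)) <= 4); last by rewrite -mulr_sumr; lra.
rewrite big_seq [leRHS]big_seq; apply: ler_sum => t ts.
rewrite [leRHS]mulrCA; apply: ler_wpM2l; first exact: w_ge.
rewrite mulrA ler_pM2r ?invr_gt0 ?(lt_le_trans m_gt (q_ge t ts)) //.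
rewrite !mixture_convex_comb mixture_dirac.
by have := mixture_ge0 p0_mix (v_ge^~ t); lra.
Qed.
End MixtureDesign.

Section EsumFacts.
Variables (R : realType) (T : choiceType).
Local Open Scope ereal_scope.

Lemma esumZ_le (S : set T) (k : R) (a : T -> R) : (0 <= k)%R -> (forall t, 0 <= a t)%R ->
  \esum_(t in S) (k * a t)%:E <= k%:E * \esum_(t in S) (a t)%:E.
Proof.
move=> k_ge a_ge; apply: ge_ereal_sup => _ [F [F_fin FS] <-].
under eq_fsbigr do rewrite EFinM.
rewrite -ge0_mule_fsumr; last by move=> t; rewrite lee_fin.
apply: lee_wpmul2l; first by rewrite lee_fin.
by apply: ereal_sup_ubound; exists F.
Qed.

Lemma esum_ge_term (S : set T) (a : T -> \bar R) t : (forall t, 0 <= a t) -> S t ->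
  a t <= \esum_(i in S) a i.
Proof.
move=> a_ge St; apply: esum_ge; exists [set t]; last by rewrite fsbig_set1.
by split; [exact: finite_set1 | move=> x ->].
Qed.

Lemma esum_if_fset (X : set T) (f g : T -> R) : finite_set X ->
  (forall t, 0 <= f t)%R -> (forall t, 0 <= g t)%R ->
  \esum_(t in [set: T]) (if t \in X then f t else g t)%:E =
    (\sum_(t <- fset_set X) f t)%:E + \esum_(t in ~` X) (g t)%:E.
Proof.
move=> X_fin f_ge g_ge.
have fg_ge t : 0 <= (if t \in X then f t else g t)%:E by rewrite lee_fin; case: ifP.
rewrite (esumID X) // !setTI (esum_fset X_fin (fun t _ => fg_ge t)).
rewrite fsbig_finite // sumEFin; congr (_%:E + _).
  by apply: eq_big_seq => t; rewrite in_fset_set // => ->.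
by apply: eq_esum => t /= tX; rewrite memNset.
Qed.

Lemma exists_finite_tail (mu : T -> R) (tau : R) : (forall t, 0 <= mu t)%R ->
  \esum_(t in [set: T]) (mu t)%:E = 1 -> (0 < tau)%R ->
  exists X : set T, [/\ finite_set X, (\sum_(t <- fset_set X) mu t <= 1)%R &
    \esum_(t in ~` X) (mu t)%:E <= tau%:E].
Proof.
move=> mu_ge mu_sum1 tau_gt.
have : (1 - tau)%:E < \esum_(t in [set: T]) (mu t)%:E by rewrite mu_sum1 lte_fin; lra.
move=> /ereal_sup_gt [_ [X [X_fin _] <-] head_gt]; exists X.
rewrite fsbig_finite // sumEFin lte_fin in head_gt.
have := esum_if_fset X_fin mu_ge mu_ge; under eq_esum do rewrite if_same.
have : 0 <= \esum_(t in ~` X) (mu t)%:E by apply: esum_ge0 => t _; rewrite lee_fin.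
case: (\esum_(t in ~` X) _) => [e | | ] // e_ge; rewrite mu_sum1; last by rewrite addey.
rewrite -EFinD => -[head_tail].
by rewrite lee_fin in e_ge; split; rewrite ?lee_fin //; lra.
Qed.

Lemma esum_le_bulk_tail (X : set T) (F G f g : T -> R) (a C b c : R) :
  finite_set X -> (0 <= a)%R ->
  (forall t, 0 <= G t)%R -> (forall t, 0 <= f t)%R -> (forall t, 0 <= g t)%R ->
  (forall t, F t <= a * G t + (if t \in X then f t else g t))%R ->
  \esum_(t in [set: T]) (G t)%:E <= C%:E -> (\sum_(t <- fset_set X) f t <= b)%R ->
  \esum_(t in ~` X) (g t)%:E <= c%:E ->
  \esum_(t in [set: T]) (F t)%:E <= (a * C + b + c)%:E.
Proof.
move=> X_fin a_ge G_ge f_ge g_ge F_le G_sum f_sum g_sum.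
apply: le_trans (_ : \esum_(t in [set: T])
  ((a * G t)%:E + (if t \in X then f t else g t)%:E) <= _).
  by apply: le_esum => t _; rewrite -EFinD lee_fin.
rewrite esumD; last 2 first.
- by move=> t _; rewrite lee_fin mulr_ge0.
- by move=> t _; rewrite lee_fin; case: ifP.
rewrite esum_if_fset // !EFinD addeA; apply: leeD => //; apply: leeD; last by rewrite lee_fin.
apply: le_trans (esumZ_le _ a_ge G_ge) _; rewrite EFinM.
by apply: lee_wpmul2l; rewrite ?lee_fin.
Qed.
End EsumFacts.

Section ExtendedRatio.
Variable R : realType.

Lemma EFin_sqr_div (r z : R) : (z = 0 -> r = 0) ->
  (r%:E * (r%:E / z%:E) = (r * (r / z))%:E)%E.
Proof.
move=> z0_r0; rewrite inver; case: eqP => [/z0_r0->|_]; last by rewrite -!EFinM.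
by rewrite !mul0e mul0r.
Qed.

(* In [\bar R], [x / 0 = x * +oo]. *)
Lemma fin_sqr_div_le (x : \bar R) (m C : R) : (0 <= x)%E -> 0 <= m ->
  (x * (x / m%:E) <= C%:E)%E -> x = (fine x)%:E /\ (m = 0 -> fine x = 0).
Proof.
case: x => [r| |] //= r_ge m_ge le_C.
  split => // m0; apply/eqP; apply: contraTT le_C => r_neq0.
  have r_gt : 0 < r by rewrite lt_def r_neq0.
  by rewrite m0 inver eqxx !gt0_muley ?lte_fin // leye_eq.
suff : (+oo / m%:E)%E = +oo%E by move: le_C => /[swap] ->; rewrite mulyy leye_eq.
rewrite inver; case: eqP => [_|/eqP m_neq0]; first exact: mulyy.
by rewrite gt0_mulye // lte_fin invr_gt0 lt_def m_neq0.
Qed.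
End ExtendedRatio.

Section Coverage.
Variables (R : realType) (T : countType) (I : Type).
Implicit Types (D : set I) (v : I -> T -> R) (mu : T -> R).

Lemma exists_mixture_ratio_le_tail D v mu (B tau : R) : D !=set0 -> is_distr mu ->
  0 < tau -> (forall i t, D i -> 0 <= v i t <= B) ->
  exists X, exists2 p, is_mixture D p &
    [/\ finite_set X, (\esum_(t in ~` X) (mu t)%:E <= tau%:E)%E,
     forall i t, D i -> t \in X -> 0 < v i t -> 0 < mixture v p t &
     forall i, D i -> \sum_(t <- fset_set X) mu t * (v i t / mixture v p t) <= 4].
Proof.
move=> D0 [mu_ge mu_sum1] tau_gt v_bnd.
have [X [X_fin X_le1 X_tail]] := exists_finite_tail mu_ge mu_sum1 tau_gt.
pose good t := `[< exists2 i, D i & 0 < v i t >].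
pose s := [seq t <- fset_set X | good t].
have s_good t : t \in s -> exists2 i, D i & 0 < v i t.
  by rewrite mem_filter => /andP[/asboolP].
have s_le1 : \sum_(t <- s) mu t <= 1.
  by rewrite big_filter (le_trans _ X_le1) // [leRHS](bigID good) /= lerDl sumr_ge0.
have v_ge i t : D i -> 0 <= v i t by move=> Di; have /andP[] := v_bnd i t Di.
have v_le i t : D i -> t \in s -> v i t <= B by move=> Di _; have /andP[] := v_bnd i t Di.
have [p [p_mix p_gt p_ratio]] := exists_mixture_ratio_le D0 v_ge v_le s_good
  (fun t _ => mu_ge t) s_le1.
exists X, p => //; split=> // [i t Di tX vi_gt | i Di].
  by apply: p_gt; rewrite mem_filter in_fset_set // tX andbT; apply/asboolP; exists i.
rewrite -(big_rmcond good) => [|t /asboolPn no_i]; first by rewrite -big_filter p_ratio.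
suff -> : v i t = 0 by rewrite mul0r mulr0.
apply/eqP; rewrite eq_le v_ge // andbT leNgt; apply/negP => vi_gt.
by apply: no_i; exists i.
Qed.

Lemma exists_mixture_coverage_real D v mu (C eps theta : R) : D !=set0 ->
  is_distr mu -> 0 < C -> 0 < eps -> 0 < theta ->
  (forall i t, D i -> 0 <= v i t) -> (forall i t, D i -> mu t = 0 -> v i t = 0) ->
  (forall i, D i -> \esum_(t in [set: T]) (v i t * (v i t / mu t))%:E <= C%:E)%E ->
  exists2 p, is_mixture D p & forall i, D i ->
    (\esum_(t in [set: T]) (v i t * (v i t / (mixture v p t + eps * v i t)))%:E
      <= (Num.sqrt (C / eps) + theta)%:E)%E.
Proof.
move=> D0 /[dup] mu_distr [mu_ge mu_sum1] C_gt eps_gt theta_gt v_ge v_mu0 v_C.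
have v_bnd i t : D i -> 0 <= v i t <= C + 1.
  move=> Di; rewrite v_ge //=.
  apply: le_of_sqr_div_le (v_ge i t Di) _ (v_mu0 i t Di) _.
    by rewrite mu_ge -lee_fin -mu_sum1 esum_ge_term // => x; rewrite lee_fin.
  rewrite -lee_fin; apply: le_trans (v_C i Di).
  by apply: esum_ge_term => // x; rewrite lee_fin mulr_ge0 ?divr_ge0 ?v_ge.
pose k := Num.sqrt (C / eps).
have k_gt : 0 < k by rewrite sqrtr_gt0 divr_gt0.
pose a := (2 * k * eps)^-1; pose b := k / 8; pose c := k / (2 * eps).
have [a_gt b_gt c_gt] : [/\ 0 < a, 0 < b & 0 < c].
  by split; rewrite ?invr_gt0 ?divr_gt0 ?mulr_gt0.
have [X [p p_mix [X_fin X_tail p_gt p_ratio]]] :=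
  exists_mixture_ratio_le_tail D0 mu_distr (divr_gt0 theta_gt c_gt) v_bnd.
exists p => // i Di.
pose q := mixture v p; pose bulk t := b * (mu t * (v i t / q t)).
have q_ge t : 0 <= q t := mixture_ge0 p_mix (v_ge^~ t).
have G_ge t : 0 <= v i t * (v i t / mu t) by rewrite mulr_ge0 ?divr_ge0 ?v_ge.
have bulk_ge t : 0 <= bulk t by rewrite /bulk !mulr_ge0 ?invr_ge0 ?v_ge // ltW.
have tail_ge t : 0 <= c * mu t by rewrite mulr_ge0 // ltW.
have pointwise t : v i t * (v i t / (q t + eps * v i t)) <=
    a * (v i t * (v i t / mu t)) + (if t \in X then bulk t else c * mu t).
  apply: sqr_div_le_bulk_tail; rewrite ?v_ge ?mu_ge //; first exact: v_mu0.
  exact: p_gt.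
have bulk_sum : \sum_(t <- fset_set X) bulk t <= 4 * b.
  by rewrite -mulr_sumr mulrC ler_wpM2r ?p_ratio // ltW.
have tail_sum : (\esum_(t in ~` X) (c * mu t)%:E <= theta%:E)%E.
  apply: le_trans (esumZ_le _ (ltW c_gt) mu_ge) _.
  rewrite -(divfK (lt0r_neq0 c_gt) theta) mulrC (EFinM c).
  by apply: lee_wpmul2l; rewrite ?lee_fin // ltW.
apply: le_trans (esum_le_bulk_tail X_fin (ltW a_gt) G_ge bulk_ge tail_ge pointwise
  (v_C i Di) bulk_sum tail_sum) _.
have C_eq : C = k ^+ 2 * eps by rewrite sqr_sqrtr ?divfK ?gt_eqF // divr_ge0 // ltW.
have -> : a * C + 4 * b + theta = k + theta by rewrite C_eq /a /b; field; rewrite !gt_eqF.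
by rewrite lee_fin.
Qed.

Lemma mixture_EFin D (d : I -> T -> \bar R) v p t :
  is_mixture D p -> (forall i, D i -> d i t = (v i t)%:E) ->
  (\sum_(wp <- p) (wp.1)%:E * d wp.2 t = (mixture v p t)%:E)%E.
Proof.
move=> [F _] dE; rewrite /mixture.
elim: F => [|wp p' [_ Dw] _ IH]; first by rewrite !big_nil.
by rewrite !big_cons IH dE // -EFinM -EFinD.
Qed.

Lemma exists_mixture_coverage D (d : I -> T -> \bar R) mu (C eps theta : R) :
  D !=set0 -> is_distr mu -> 0 < C -> 0 < eps -> 0 < theta ->
  (forall i t, D i -> 0 <= d i t)%E ->
  (forall i, D i -> \esum_(t in [set: T]) d i t * (d i t / (mu t)%:E) <= C%:E)%E ->
  exists2 p, is_mixture D p & forall i, D i ->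
    (\esum_(t in [set: T]) d i t *
       (d i t / (\sum_(wp <- p) (wp.1)%:E * d wp.2 t + eps%:E * d i t))
      <= (Num.sqrt (C / eps) + theta)%:E)%E.
Proof.
move=> D0 /[dup] mu_distr [mu_ge _] C_gt eps_gt theta_gt d_ge d_C.
pose v i t := fine (d i t).
have d_fin i t : D i -> d i t = (v i t)%:E /\ (mu t = 0 -> v i t = 0).
  move=> Di; apply: fin_sqr_div_le (d_ge i t Di) (mu_ge t) _; apply: le_trans (d_C i Di).
  by apply: esum_ge_term => // x; rewrite !mule_ge0 ?inve_ge0 ?lee_fin ?d_ge.
have v_ge i t : D i -> 0 <= v i t by move=> Di; rewrite -lee_fin -(d_fin i t Di).1 d_ge.
have v_C i : D i -> (\esum_(t in [set: T]) (v i t * (v i t / mu t))%:E <= C%:E)%E.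
  move=> Di; rewrite -(eq_esum (fun t _ => EFin_sqr_div (d_fin i t Di).2)).
  by under eq_esum => t _ do rewrite -(d_fin i t Di).1; exact: d_C.
have [p p_mix p_cov] := exists_mixture_coverage_real D0 mu_distr C_gt eps_gt theta_gt
  v_ge (fun i t Di => (d_fin i t Di).2) v_C.
exists p => // i Di; apply: le_trans (p_cov i Di); rewrite le_eqVlt; apply/orP; left.
apply/eqP/eq_esum => t _.
rewrite (mixture_EFin p_mix (fun j Dj => (d_fin j t Dj).1)) (d_fin i t Di).1 -EFinM -EFinD.
apply: EFin_sqr_div => den0.
by have := mixture_ge0 p_mix (v_ge^~ t); have := v_ge i t Di; nra.
Qed.
End Coverage.

Section Occupancy.
Variables (R : realType) (X : countType) (A : finType).
Variables (M : mdp R X A) (h : nat).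

Lemma traj_prob_ge0 (pi : policy R X A) (tau : seq (X * A)) :
  forall k hist, 0 <= traj_prob M pi k hist tau.
Proof.
elim: tau => [|xa tau IH] k hist /=; first exact: ler01.
rewrite !mulr_ge0 //; last by case: (pol_distr pi k hist xa.1) => + _; apply.
case: hist => [|y hist]; first by case: (init_distr M) => + _; apply.
by case: (trans_distr M k.-1 (last xa (y :: hist)).1 (last xa (y :: hist)).2) => + _; apply.
Qed.

Lemma occ_ge0 (pi : policy R X A) xa : (0 <= occ M pi h xa)%E.
Proof. by apply: esum_ge0 => tau _; rewrite lee_fin traj_prob_ge0. Qed.

Lemma C1_ge0 (Pi : set (policy R X A)) : Pi !=set0 -> (0 <= C1 M Pi h)%E.
Proof.
move=> [pi0 Pi_pi0]; apply: le_ereal_inf_tmp => _ [mu [mu_ge _] <-].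
apply: le_trans (ereal_sup_ubound (ex_intro2 _ _ pi0 Pi_pi0 erefl)).
by apply: esum_ge0 => xa _; rewrite !mule_ge0 ?occ_ge0 ?inve_ge0 ?lee_fin.
Qed.

Lemma C1_approx (Pi : set (policy R X A)) (r delta : R) :
  C1 M Pi h = r%:E -> 0 < delta ->
  exists2 mu, is_distr mu & forall pi, Pi pi ->
    (expect_layer M pi h (fun xa => occ M pi h xa / (mu xa)%:E) <= (r + delta)%:E)%E.
Proof.
move=> C1E delta_gt.
have C1_fin : C1 M Pi h \is a fin_num by rewrite C1E.
have [_ [mu mu_distr <-] mu_lt] := lb_ereal_inf_adherent delta_gt C1_fin.
rewrite -[ereal_inf _]/(C1 M Pi h) C1E -EFinD in mu_lt.
exists mu => // pi Pi_pi; apply/ltW/(le_lt_trans _ mu_lt).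
by apply: ereal_sup_ubound; exists pi.
Qed.
End Occupancy.

Theorem proposition7p1 (R : realType) (X : countType) (A : finType)
  (M : mdp R X A) (Pi : set (policy R X A)) (h : nat) (eps : R) :
  Pi !=set0 -> (1 <= h <= horizon M)%N -> 0 < eps ->
  (Cov M Pi h eps <= 1 + 2%:E * sqrte (C1 M Pi h * (eps^-1)%:E))%E.
Proof.
move=> Pi0 _ eps_gt.
case C1E : (C1 M Pi h) (C1_ge0 M h Pi0) => [r| |] // r_ge; last first.
  by rewrite mulyr gtr0_sg ?invr_gt0 // mul1e /= mulry gtr0_sg // mul1e addey // leey.
have [mu mu_distr mu_C] := C1_approx C1E (divr_gt0 eps_gt (ltr0n _ 4)).
have [C_gt half_gt] : 0 < r + eps / 4 /\ 0 < 1 / 2 :> R.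
  by rewrite lee_fin in r_ge; split; lra.
have [p p_mix p_cov] := exists_mixture_coverage Pi0 mu_distr C_gt eps_gt half_gt
  (fun pi xa _ => occ_ge0 M h pi xa) mu_C.
apply: le_trans (_ : Psi M Pi h eps p <= _)%E; first by apply: ereal_inf_lbound; exists p.
apply: le_trans (_ : (Num.sqrt ((r + eps / 4) / eps) + 1 / 2)%:E <= _)%E.
  by apply: ge_ereal_sup => _ [pi Pi_pi <-]; exact: p_cov.
have -> : (r + eps / 4) / eps = r / eps + 1 / 4 by field; rewrite gt_eqF.
by rewrite lee_fin sqrtrD_quarter_le // divr_ge0 // ltW.
Qed.
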